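(* Let $n\ge 1$, let $T$ be a regular tournament on $2n+1$ vertices (every vertex has in-degree and out-degree $n$), and let $G$ be the hairy tournament obtained from $T$ by attaching to each vertex $a$ of $T$ exactly $2n+1$ new vertices, each having exactly one incident edge, directed from $a$ to it. Then $|V(G)|=(2n+2)(2n+1)$ and the minimum size of a quasi-kernel of $G$ is $1+n(2n+1)$.
   Context: Digraphs are finite, without loops and without multiple edges in the same direction. For $V'\subseteq V(G)$, $\Gamma^+(V')$ is the set of out-neighbours of vertices of $V'$ and $\Gamma^+_2(V')=V'\cup\Gamma^+(V')\cup\Gamma^+(\Gamma^+(V'))$. A quasi-kernel is an independent set $Q$ with $\Gamma^+_2(Q)=V(G)$. *)

From mathcomp Require Import all_boot.
Set Implicit Arguments. Unset Strict Implicit. Unset Printing Implicit Defensive.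

Definition loopless (V : finType) (E : rel V) : Prop := forall x, ~~ E x x.

Definition outN (V : finType) (E : rel V) (S : {set V}) : {set V} :=
  [set y | [exists x in S, E x y]].

Definition outN2 (V : finType) (E : rel V) (S : {set V}) : {set V} :=
  S :|: outN E S :|: outN E (outN E S).

Definition independent (V : finType) (E : rel V) (S : {set V}) : Prop :=
  forall x y, x \in S -> y \in S -> ~~ E x y.

Definition quasi_kernel (V : finType) (E : rel V) (Q : {set V}) : Prop :=
  independent E Q /\ outN2 E Q = [set: V].

Definition tournament (V : finType) (E : rel V) : Prop :=
  loopless E /\ forall x y, x != y -> (E x y (+) E y x).

Definition outdeg (V : finType) (E : rel V) (x : V) : nat := #|[set y | E x y]|.
Definition indeg (V : finType) (E : rel V) (x : V) : nat := #|[set y | E y x]|.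

Definition regular_tournament (n : nat) (V : finType) (E : rel V) : Prop :=
  tournament E /\ #|V| = (2 * n).+1 /\
  forall x, outdeg E x = n /\ indeg E x = n.

(* Hairy digraph: vertices of T plus, for each vertex a, k new vertices
   (a, i), i < k, each with the single arc a -> (a, i). *)
Definition hairy_vertex (V : finType) (k : nat) : finType :=
  (V + (V * 'I_k))%type.

Definition hairy_edge (V : finType) (k : nat) (E : rel V) :
  rel (hairy_vertex V k) :=
  fun u v =>
    match u, v with
    | inl x, inl y => E x y
    | inl x, inr (a, _) => x == a
    | _, _ => false
    end.

From mathcomp Require Import all_boot.
From mathcomp Require Import zify.

Set Implicit Arguments.
Unset Strict Implicit.
Unset Printing Implicit Defensive.

(* Write [inl a] for the vertices of the tournament T and [inr (a, i)] for the
   k leaves hanging from a.  A leaf [inr (a, i)] can only be reached from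
   [inl a], and [inl a] only from in-neighbours of a in T; so a quasi-kernel Q
   containing no vertex of T must contain all k|V| leaves (hairs_sub_qk), and
   since an independent set of a tournament holds at most one vertex of T, a
   quasi-kernel containing [inl v] contains the "star" of v: v together with
   every leaf of every in-neighbour of v (star_sub_qk).  This gives the lower
   bound 1 + n(2n+1).  Conversely, in a regular tournament every vertex v is a
   king (reaches all vertices within two steps, regular_king), and the star of
   a king is a quasi-kernel (star_qk) of exactly that size (card_star). *)

Section OutN2.
Variables (V : finType) (E : rel V).

Lemma mem_outN (S : {set V}) x y : x \in S -> E x y -> y \in outN E S.
Proof. by move=> xS exy; rewrite inE; apply/exists_inP; exists x. Qed.

Lemma outN2_0 (S : {set V}) x : x \in S -> x \in outN2 E S.
Proof. by rewrite /outN2 !in_setU => ->. Qed.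

Lemma outN2_1 (S : {set V}) x y : x \in S -> E x y -> y \in outN2 E S.
Proof. by move=> xS exy; rewrite /outN2 !in_setU (mem_outN xS exy) orbT. Qed.

Lemma outN2_2 (S : {set V}) x y z : x \in S -> E x y -> E y z -> z \in outN2 E S.
Proof.
by move=> xS exy eyz; rewrite /outN2 !in_setU (mem_outN (mem_outN xS exy) eyz) orbT.
Qed.

End OutN2.

Section Tournament.
Variables (V : finType) (E : rel V).
Hypothesis tourE : tournament E.

Lemma tournament_asym x y : E x y -> ~~ E y x.
Proof.
move=> exy; have xy : x != y.
  by apply/eqP => eq_xy; subst y; move: (tourE.1 x); rewrite exy.
by move: (tourE.2 x y xy); rewrite exy; case: (E y x).
Qed.

(* If x beats v and no out-neighbour of v beats x, then x beats v and all
   out-neighbours of v, so outdeg x > outdeg v.  Hence a vertex of maximum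
   out-degree reaches each vertex beating it in two steps. *)
Lemma two_step_reach v x :
  #|[set a | E x a]| <= #|[set a | E v a]| -> E x v -> exists2 y, E v y & E y x.
Proof.
move=> deg exv; apply/exists_inP; apply: contraT; rewrite negb_exists_in.
move=> /forall_inP noPath.
have sub : v |: [set a | E v a] \subset [set a | E x a].
  apply/subsetP => z; rewrite !inE => /orP[/eqP -> // | evz].
  have zx : z != x by apply/eqP => zx; subst z; move: (tournament_asym exv); rewrite evz.
  by move: (tourE.2 z x zx); rewrite (negbTE (noPath z evz)).
move: (subset_leq_card sub); rewrite cardsU1 inE tourE.1 /=; lia.
Qed.

End Tournament.

Section HairyDigraph.
Variables (V : finType) (k : nat) (E : rel V).
Local Notation HV := (hairy_vertex V k).
Local Notation HE := (hairy_edge E).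

Lemma outNP (S : {set HV}) y :
  reflect (exists2 x, x \in S & HE x y) (y \in outN HE S).
Proof. by rewrite inE; apply: exists_inP. Qed.

Lemma leaf_cover (Q : {set HV}) a i :
  inr (a, i) \in outN2 HE Q ->
  [\/ inr (a, i) \in Q, inl a \in Q | exists2 x, inl x \in Q & E x a].
Proof.
rewrite /outN2 !inE => /orP[/orP[leafQ | /exists_inP[w wQ]] | /exists_inP[w /outNP[w' w'Q]]].
- by constructor 1.
- by case: w wQ => [x|[]] //= xQ /eqP <-; constructor 2.
- case: w => [x|[]] //= ew /eqP xa; subst x.
  by case: w' w'Q ew => [x|[]] //= xQ exa; constructor 3; exists x.
Qed.

Definition hairs (S : {set V}) : {set HV} :=
  [set inr p | p in setX S [set: 'I_k]].

Lemma card_hairs (S : {set V}) : #|hairs S| = #|S| * k.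
Proof. by rewrite card_imset ?cardsX ?cardsT ?card_ord //; apply: inr_inj. Qed.

Lemma core_notin_hairs (S : {set V}) v : inl v \notin hairs S.
Proof. by apply/imsetP => -[]. Qed.

Definition star (v : V) : {set HV} := inl v |: hairs [set a | E a v].

Lemma card_star v : #|star v| = 1 + #|[set a | E a v]| * k.
Proof. by rewrite cardsU1 core_notin_hairs card_hairs. Qed.

Lemma hairs_sub_qk (Q : {set HV}) :
  quasi_kernel HE Q -> (forall x, inl x \notin Q) -> hairs [set: V] \subset Q.
Proof.
move=> [_ covQ] noCore; apply/subsetP => _ /imsetP[[a i] _ ->].
have : inr (a, i) \in outN2 HE Q by rewrite covQ inE.
case/leaf_cover => // [aQ | [x xQ _]]; first by move: (noCore a); rewrite aQ.
by move: (noCore x); rewrite xQ.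
Qed.

Section HairyTournament.
Hypothesis tourE : tournament E.

Lemma core_unique (Q : {set HV}) x y :
  independent HE Q -> inl x \in Q -> inl y \in Q -> x = y.
Proof.
move=> indQ xQ yQ; apply/eqP; apply: contraT => xy.
by move: (tourE.2 x y xy) (indQ _ _ xQ yQ) (indQ _ _ yQ xQ) => /= /addbP ->;
  case: (E y x).
Qed.

Lemma star_sub_qk (Q : {set HV}) v :
  quasi_kernel HE Q -> inl v \in Q -> star v \subset Q.
Proof.
move=> [indQ covQ] vQ; apply/subsetP => u.
rewrite !inE => /orP[/eqP -> // | /imsetP[[a i] + ->]].
rewrite in_setX inE => /andP[eav _].
have : inr (a, i) \in outN2 HE Q by rewrite covQ inE.
case/leaf_cover => // [aQ | [x xQ exa]]; first by move: (indQ _ _ aQ vQ); rewrite /= eav.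
move: exa; rewrite (core_unique indQ xQ vQ) => eva.
by move: (tournament_asym tourE eav); rewrite eva.
Qed.

Lemma star_qk v :
  (forall x, E x v -> exists2 y, E v y & E y x) -> quasi_kernel HE (star v).
Proof.
move=> king; split.
  move=> x y; rewrite !inE => /orP[/eqP -> | /imsetP[p _ ->]] //.
  case/orP => [/eqP -> | /imsetP[[a i] + ->]] //=; first exact: tourE.1.
  rewrite in_setX inE => /andP[eav _].
  by apply/eqP => va; subst a; move: (tourE.1 v); rewrite eav.
have vQ : inl v \in star v by rewrite !inE eqxx.
apply/setP => u; rewrite in_setT; case: u => [x | [a i]].
- case: (eqVneq x v) => [-> | xv]; first exact: outN2_0.
  move: (tourE.2 x v xv); case: (E v x) / boolP => [evx _ | _].
    exact: (outN2_1 vQ).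
  by rewrite addbF => /king[y evy eyx]; exact: (outN2_2 (y := inl y) vQ evy).
- case: (eqVneq a v) => [-> | av]; first by apply: (outN2_1 vQ); rewrite /= eqxx.
  move: (tourE.2 a v av); case: (E v a) / boolP => [eva _ | _].
    by apply: (outN2_2 (y := inl a) vQ eva); rewrite /= eqxx.
  rewrite addbF => eav; apply: outN2_0; rewrite !inE; apply/orP; right.
  by apply/imsetP; exists (a, i); rewrite // in_setX !inE eav.
Qed.

End HairyTournament.
End HairyDigraph.

Lemma regular_king n (V : finType) (E : rel V) v x :
  regular_tournament n E -> E x v -> exists2 y, E v y & E y x.
Proof.
move=> [tourE [_ deg]]; apply: two_step_reach => //.
by case: (deg x) (deg v) => [dx _] [dv _]; move: dx dv; rewrite /outdeg => -> ->.
Qed.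

Theorem mainTheorem6 (n : nat) (V : finType) (E : rel V) :
  1 <= n ->
  regular_tournament n E ->
  #|hairy_vertex V (2 * n).+1| = (2 * n + 2) * (2 * n + 1) /\
  (exists Q : {set hairy_vertex V (2 * n).+1},
      quasi_kernel (hairy_edge E) Q /\ #|Q| = 1 + n * (2 * n + 1)) /\
  (forall Q : {set hairy_vertex V (2 * n).+1},
      quasi_kernel (hairy_edge E) Q -> 1 + n * (2 * n + 1) <= #|Q|).
Proof.
move=> n_gt0 regE; have [tourE [cardV deg]] := regE.
have indegN v : #|[set a | E a v]| = n by case: (deg v).
split; first by rewrite card_sum card_prod card_ord cardV; lia.
split.
  have [v _] : exists v, v \in V by apply/card_gt0P; rewrite cardV.
  exists (star (2 * n).+1 E v); split; last by rewrite card_star indegN; lia.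
  by apply: (star_qk _ tourE) => x; apply: regular_king regE.
move=> Q qkQ; case: (pickP (fun x => inl x \in Q)) => [v vQ | noCore].
  move: (subset_leq_card (star_sub_qk tourE qkQ vQ)).
  by rewrite card_star indegN; lia.
have /subset_leq_card := hairs_sub_qk qkQ (fun x => negbT (noCore x)).
by rewrite card_hairs cardsT cardV; nia.
Qed.
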